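(* Let $x$ be an $n\times n$ matrix of indeterminates over $\mathbb{Z}$, let $\Delta_i(x)$ be the determinant of the matrix obtained from $x$ by removing the first $i$ rows and the first $i$ columns, and let $\Delta(x)=\prod_{i=1}^{n-1}\Delta_i(x)$. Let $W$ be the group of all $n\times n$ matrices obtained from the identity matrix $1_n$ by permuting its columns. Then there exist $w_0,\dots,w_N\in W$, elements $a_1(x),\dots,a_N(x)\in\mathbb{Z}[x,\Delta(x)^{-1}]$ and $1\times(n-1)$ vectors $b_1(x),\dots,b_N(x)\in\mathbb{Z}[x,\Delta(x)^{-1}]^{n-1}$ such that, setting $$s_i(x)=\begin{pmatrix}a_i(x)&b_i(x)\\0&1_{n-1}\end{pmatrix},$$ one has $$x=w_0\cdot s_1(x)\cdot w_1\cdot s_2(x)\cdot w_2\cdots s_N(x)\cdot w_N.$$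
   Context: $\mathbb{Z}[x,\Delta(x)^{-1}]$ denotes the polynomial ring over $\mathbb{Z}$ in the $n^2$ entries of $x$, localized at $\Delta(x)$; $1_{n-1}$ is the $(n-1)\times(n-1)$ identity matrix. *)

From HB Require Import structures.
From mathcomp Require Import all_boot all_order all_algebra all_fingroup.
From mathcomp Require Import mpoly.
Set Implicit Arguments. Unset Strict Implicit. Unset Printing Implicit Defensive.
Import GRing.Theory.
Local Open Scope ring_scope.

(* Polynomial ring Z[x] in the (n+1)^2 entries of a generic (n+1)x(n+1) matrix;
   the variable for entry (i,j) is 'X_(mxvec_index i j). *)
Definition Zx (n : nat) := {mpoly int[n.+1 * n.+1]}.

Definition gen_x (n : nat) : 'M[Zx n]_n.+1 :=
  \matrix_(i, j) 'X_(mxvec_index i j).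

Definition Delta_i (n i : nat) : Zx n :=
  \det (\matrix_(k < n.+1 - i, l < n.+1 - i)
          gen_x n (inord (i + k)) (inord (i + l))).

Definition Delta (n : nat) : Zx n := \prod_(1 <= i < n.+1) Delta_i n i.

(* Fraction field of Z[x]; Z[x, Delta^{-1}] is realised as its subring of
   elements p / Delta^k. *)
Definition Kx (n : nat) := {fraction Zx n}.

Definition in_loc (n : nat) (f : Kx n) : Prop :=
  exists (p : Zx n) (k : nat), f = (tofrac p) / (tofrac (Delta n)) ^+ k.

Definition smx (n : nat) (a : Kx n) (b : 'rV[Kx n]_n) : 'M[Kx n]_(1 + n) :=
  block_mx (a%:M : 'M_1) b 0 1%:M.

Definition toK (n : nat) (p : Zx n) : Kx n := tofrac p.

From HB Require Import structures.
From mathcomp Require Import all_boot all_order all_algebra all_fingroup.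
From mathcomp Require Import mpoly.
Set Implicit Arguments. Unset Strict Implicit. Unset Printing Implicit Defensive.
Import GRing.Theory.
Local Open Scope ring_scope.

(* Let Y_k be x with its first k rows replaced by those of the identity, so
   Y_0 = x, Y_(n+1) = 1 and det Y_k = Delta_k.  Since Y_k and Y_(k+1) differ
   only in row k, Y_k = E_k Y_(k+1), where E_k is the identity with row k
   replaced by x_k Y_(k+1)^-1; by Cramer's rule its entries have denominator
   Delta_(k+1), which divides Delta.  Conjugating E_k by the transposition
   (0 k) moves the special row to the top, giving a matrix of the shape
   [[a, b], [0, 1]]; so x = E_0 ... E_n is a product of the required form. *)

Section RowSubstitution.
Variables (R : nzRingType) (m : nat).

Definition row_subst_mx (k : 'I_m) (v : 'rV[R]_m) : 'M[R]_m :=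
  \matrix_(r, c) if r == k then v 0 c else (r == c)%:R.

Lemma mul_row_subst_mx k v (M : 'M[R]_m) :
  row_subst_mx k v *m M = \matrix_(r, c) if r == k then (v *m M) 0 c else M r c.
Proof.
apply/matrixP => r c; rewrite !mxE; under eq_bigr do rewrite mxE.
case: eqP => // _; rewrite (bigD1 r) //= big1 ?addr0 => [|j /negPf hj].
  by rewrite eqxx mul1r.
by rewrite eq_sym hj mul0r.
Qed.

Lemma row_subst_mx_conj (s : 'S_m) k v :
  perm_mx s *m row_subst_mx k v *m perm_mx s^-1%g =
  row_subst_mx (s^-1%g k) (col_perm s v).
Proof.
rewrite -row_permE -col_permE; apply/matrixP => r c; rewrite !mxE.
by rewrite (inj_eq perm_inj) -(inj_eq (@perm_inj _ s^-1%g)) permK.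
Qed.

Lemma row_subst_mx_tperm (i k : 'I_m) v :
  row_subst_mx k v =
  perm_mx (tperm i k) *m row_subst_mx i (col_perm (tperm i k) v)
    *m perm_mx (tperm i k).
Proof.
by rewrite -{3}tpermV row_subst_mx_conj tpermV tpermL -col_permM tperm2 col_perm1.
Qed.

End RowSubstitution.

Section HeadRowProducts.
Variables (R : nzRingType) (n : nat) (P : R -> Prop).

Definition head_row_mx (a : R) (b : 'rV[R]_n) : 'M[R]_(1 + n) :=
  block_mx a%:M b 0 1%:M.

Lemma row_subst_mx0 (u : 'rV[R]_(1 + n)) :
  row_subst_mx 0 u = head_row_mx (u 0 0) (rsubmx u).
Proof.
apply/matrixP => r c; rewrite /head_row_mx.
rewrite -[r](@splitK 1 n) -[c](@splitK 1 n).
case: splitP => r0 _; case: splitP => c0 _;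
  rewrite ?(@block_mxEul _ 1 n 1 n, @block_mxEur _ 1 n 1 n,
            @block_mxEdl _ 1 n 1 n, @block_mxEdr _ 1 n 1 n) mxE
    -val_eqE ?(ord1 r0) ?(ord1 c0) /= !mxE ?eqn_add2l //.
by rewrite mulr1n; congr (u _ _); apply: val_inj.
Qed.

Definition perm_head_prod (M : 'M[R]_n.+1) : Prop :=
  exists (N : nat) (w : 'I_N.+1 -> 'S_n.+1) (a : 'I_N -> R) (b : 'I_N -> 'rV[R]_n),
    (forall i, P (a i)) /\ (forall i j, P (b i 0 j)) /\
      M = perm_mx (w ord0) *m
        \prod_(i < N) ((head_row_mx (a i) (b i) : 'M[R]_n.+1) *m perm_mx (w (lift ord0 i))).

Lemma perm_head_prod1 : perm_head_prod 1%:M.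
Proof.
exists 0%N, (fun _ => 1%g), (fun _ => 0), (fun _ => 0).
by split=> [[] //|]; split=> [[] //|]; rewrite big_ord0 perm_mx1 mulmx1.
Qed.

Lemma perm_head_prod_row_subst (k : 'I_n.+1) (v : 'rV[R]_n.+1) M :
  (forall j, P (v 0 j)) -> perm_head_prod M -> perm_head_prod (row_subst_mx k v *m M).
Proof.
move=> Pv [N [w [a [b [Pa [Pb ->]]]]]].
set t := tperm ord0 k; set u := col_perm t v.
rewrite (row_subst_mx_tperm ord0) row_subst_mx0 -/t -/u.
(* the word becomes t, head, t * w 0, then the rest of w *)
exists N.+1, (fun j : 'I_N.+2 => if unlift ord0 j is Some j' then
     (if unlift ord0 j' is Some j'' then w (lift ord0 j'') else (t * w ord0)%g) else t),
  (fun i : 'I_N.+1 => if unlift ord0 i is Some i' then a i' else u 0 0),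
  (fun i : 'I_N.+1 => if unlift ord0 i is Some i' then b i' else rsubmx (u : 'rV_(1 + n))).
split=> [i|]; first by case: unliftP; rewrite ?mxE.
split=> [i j|]; first by case: unliftP; rewrite ?mxE.
rewrite big_ord_recl /= unlift_none !liftK unlift_none.
under [X in _ = _ *m (_ * X)]eq_bigr do rewrite !liftK.
by rewrite perm_mxM -[_ * \prod_(i < N) _]/(mulmx _ _) !mulmxA.
Qed.

End HeadRowProducts.

Lemma det_castmx (R : comNzRingType) m1 m2 (e : m1 = m2) (A : 'M[R]_m1) :
  \det (castmx (e, e) A) = \det A.
Proof. by case: m2 / e; rewrite castmx_id. Qed.

Section TrailingRows.
Variables (R : comNzRingType) (n : nat).
Local Notation m := n.+1.
Implicit Types (A : 'M[R]_m) (i : nat).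

Definition trail_mx i A : 'M[R]_(m - i) :=
  \matrix_(k, l) A (inord (i + k)) (inord (i + l)).

Definition trail_rows_mx i A : 'M[R]_m :=
  \matrix_(r, c) if (i <= r)%N then A r c else (r == c)%:R.

Lemma trail_rows_mx0 A : trail_rows_mx 0 A = A.
Proof. by apply/matrixP => r c; rewrite mxE. Qed.

Lemma trail_rows_mx_id A : trail_rows_mx m A = 1%:M.
Proof. by apply/matrixP => r c; rewrite !mxE leqNgt ltn_ord. Qed.

Lemma trail_mx1 i : trail_mx i 1%:M = 1%:M.
Proof.
apply/matrixP => k l; rewrite !mxE.
have lt_ik : (i + k < m)%N by rewrite -ltn_subRL.
have lt_il : (i + l < m)%N by rewrite -ltn_subRL.
by rewrite -val_eqE /= !inordK // eqn_add2l.
Qed.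

Lemma det_trail_rows_mx i A : (i <= m)%N -> \det (trail_rows_mx i A) = \det (trail_mx i A).
Proof.
move=> le_im; have e : (i + (m - i) = m)%N by rewrite subnKC.
pose C : 'M[R]_(m - i, i) := \matrix_(k, l) A (inord (i + k)) (inord l).
suff -> : trail_rows_mx i A = castmx (e, e) (block_mx 1%:M 0 C (trail_mx i A)).
  by rewrite det_castmx det_lblock det1 mul1r.
apply/matrixP => r c; rewrite castmxE /=.
rewrite -[cast_ord _ r]splitK -[cast_ord _ c]splitK.
case: splitP => r0 /= Hr; case: splitP => c0 /= Hc;
  rewrite ?(block_mxEul, block_mxEur, block_mxEdl, block_mxEdr) !mxE -?val_eqE /= Hr Hc.
- by rewrite leqNgt ltn_ord.
- by rewrite leqNgt ltn_ord /= ltn_eqF // (leq_trans (ltn_ord r0)) ?leq_addr.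
- by rewrite leq_addr; congr (A _ _); apply: val_inj; rewrite /= inordK -?Hr -?Hc.
- by rewrite leq_addr; congr (A _ _); apply: val_inj; rewrite /= inordK -?Hr -?Hc.
Qed.

End TrailingRows.

Lemma map_trail_mx (R S : comNzRingType) n (f : {rmorphism R -> S}) i (A : 'M[R]_n.+1) :
  map_mx f (trail_mx i A) = trail_mx i (map_mx f A).
Proof. by apply/matrixP => k l; rewrite !mxE. Qed.

Lemma map_trail_rows_mx (R S : comNzRingType) n (f : {rmorphism R -> S}) i (A : 'M[R]_n.+1) :
  map_mx f (trail_rows_mx i A) = trail_rows_mx i (map_mx f A).
Proof. by apply/matrixP => r c; rewrite !mxE; case: ifP; rewrite ?rmorph_nat. Qed.

Lemma trail_rows_mxS (R : comUnitRingType) n (k : 'I_n.+1) (A : 'M[R]_n.+1) :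
  trail_rows_mx k.+1 A \in unitmx ->
  trail_rows_mx k A =
  row_subst_mx k (row k A *m invmx (trail_rows_mx k.+1 A)) *m trail_rows_mx k.+1 A.
Proof.
move=> unitY; rewrite mul_row_subst_mx -mulmxA mulVmx // mulmx1.
apply/matrixP => r c; rewrite !mxE; case: (eqVneq r k) => [->|/negPf neq_rk].
  by rewrite leqnn.
by rewrite [(k < r)%N]ltn_neqAle (inj_eq val_inj) [k == r]eq_sym neq_rk.
Qed.

Theorem perm_head_prod_trail_rows (R : comUnitRingType) n (P : R -> Prop)
    (A : 'M[R]_n.+1) :
  (forall k : 'I_n.+1, trail_rows_mx k.+1 A \in unitmx) ->
  (forall (k : 'I_n.+1) j, P ((row k A *m invmx (trail_rows_mx k.+1 A)) 0 j)) ->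
  perm_head_prod P A.
Proof.
move=> unitY Pv; rewrite -[A]trail_rows_mx0.
suff: forall t, (t <= n.+1)%N -> perm_head_prod P (trail_rows_mx (n.+1 - t) A).
  by move/(_ n.+1 (leqnn _)); rewrite subnn.
elim=> [_|t IHt lt_tn]; first by rewrite subn0 trail_rows_mx_id; apply: perm_head_prod1.
have lt_k : (n.+1 - t.+1 < n.+1)%N by rewrite ltn_subrL.
rewrite -[(n.+1 - t.+1)%N]/(nat_of_ord (Ordinal lt_k)) trail_rows_mxS //.
apply: perm_head_prod_row_subst; first exact: Pv.
by rewrite /= subnSK //; apply: IHt; apply: ltnW.
Qed.

Section GenericMatrix.
Variable n : nat.

Local Notation XK := (map_mx (@toK n) (gen_x n)).

Lemma Delta_iE i : Delta_i n i = \det (trail_mx i (gen_x n)).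
Proof. by []. Qed.

Lemma meval_gen_x : map_mx (meval (mxvec (1%:M : 'M[int]_n.+1) 0)) (gen_x n) = 1%:M.
Proof. by apply/matrixP => r c; rewrite !mxE mevalXU mxvecE mxE. Qed.

Lemma Delta_neq0 : Delta n != 0.
Proof.
apply/eqP => D0; have := congr1 (meval (mxvec (1%:M : 'M[int]_n.+1) 0)) D0.
rewrite rmorph0 rmorph_prod big1 => [/eqP|i _]; first by rewrite oner_eq0.
by rewrite Delta_iE -det_map_mx map_trail_mx meval_gen_x trail_mx1 det1.
Qed.

Lemma Delta_i_dvd i : (1 <= i <= n.+1)%N -> exists q, Delta n = Delta_i n i * q.
Proof.
case/andP => ge1_i; rewrite leq_eqVlt => /orP[/eqP->|lt_in].
  exists (Delta n).
  by rewrite Delta_iE -det_trail_rows_mx // trail_rows_mx_id det1 mul1r.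
exists ((\prod_(1 <= j < i) Delta_i n j) * \prod_(i.+1 <= j < n.+1) Delta_i n j).
by rewrite /Delta (big_cat_nat ge1_i (ltnW lt_in)) /= (big_ltn lt_in) mulrCA.
Qed.

Lemma in_loc_frac (p d q : Zx n) : Delta n = d * q -> in_loc (toK p / toK d).
Proof.
move=> Ddq; have q_neq0 : toK q != 0.
  by rewrite tofrac_eq0; apply: contraNneq Delta_neq0 => q0; rewrite Ddq q0 mulr0.
exists (p * q), 1%N.
by rewrite expr1 Ddq !rmorphM invfM mulrACA divff // mulr1.
Qed.

Lemma det_trail_rows_gen_x i :
  (i <= n.+1)%N -> \det (trail_rows_mx i XK) = toK (Delta_i n i).
Proof.
by move=> le_in; rewrite -map_trail_rows_mx det_map_mx det_trail_rows_mx.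
Qed.

Lemma trail_rows_gen_x_unit (k : 'I_n.+1) : trail_rows_mx k.+1 XK \in unitmx.
Proof.
have [q Dq] := @Delta_i_dvd k.+1 (ltn_ord k).
rewrite unitmxE unitfE det_trail_rows_gen_x // tofrac_eq0.
by apply: contraNneq Delta_neq0 => D0; rewrite Dq D0 mul0r.
Qed.

Lemma in_loc_row_gen_x_mul_inv (k j : 'I_n.+1) :
  in_loc ((row k XK *m invmx (trail_rows_mx k.+1 XK)) 0 j).
Proof.
have [q Dq] := @Delta_i_dvd k.+1 (ltn_ord k).
rewrite /invmx trail_rows_gen_x_unit det_trail_rows_gen_x //.
rewrite -map_trail_rows_mx -map_mx_adj -map_row -scalemxAr -map_mxM !mxE mulrC.
exact: in_loc_frac Dq.
Qed.

End GenericMatrix.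

Theorem lemma3p9 (n : nat) :
  exists (N : nat) (w : 'I_N.+1 -> 'S_n.+1)
         (a : 'I_N -> Kx n) (b : 'I_N -> 'rV[Kx n]_n),
    (forall i, in_loc (a i)) /\
    (forall i j, in_loc (b i 0 j)) /\
    map_mx (@toK n) (@gen_x n) =
      perm_mx (w ord0) *m
      \prod_(i < N) ((smx (a i) (b i) : 'M[Kx n]_n.+1) *m perm_mx (w (lift ord0 i))).
Proof.
exact: perm_head_prod_trail_rows (@trail_rows_gen_x_unit n) (@in_loc_row_gen_x_mul_inv n).
Qed.
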